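(* Let $k\ge2$, let $\theta_1,\dots,\theta_k\in[-\frac{\pi}{2},\frac{\pi}{2}]$ be pairwise distinct, $\theta_{\min}=\min_{p\ne j}|\theta_p-\theta_j|$, and $a=(a_1,\dots,a_k)^T$ with $|a_j|\ge m_{\min}>0$. Let $\hat\theta_1,\dots,\hat\theta_k\in[-\frac{\pi}{2},\frac{\pi}{2}]$ be pairwise distinct and $\hat a=(\hat a_1,\dots,\hat a_k)^T\in\mathbb C^k$ such that $\|\hat A\hat a-Aa\|_2<\sigma$, where $\hat A=(\phi_{2k-1}(e^{i\hat\theta_1}),\dots,\phi_{2k-1}(e^{i\hat\theta_k}))$ and $A=(\phi_{2k-1}(e^{i\theta_1}),\dots,\phi_{2k-1}(e^{i\theta_k}))$. Then $$\|\eta_{k,k}(e^{i\theta_1},\dots,e^{i\theta_k},e^{i\hat\theta_1},\dots,e^{i\hat\theta_k})\|_\infty<\frac{2^k\pi^{k-1}}{\zeta(k)\,\theta_{\min}^{k-1}}\,\frac{\sigma}{m_{\min}}.$$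
   Context: $\phi_s(z)=(1,z,\dots,z^s)^T$. For $z_1,\dots,z_p,\hat z_1,\dots,\hat z_q\in\mathbb C$, $\eta_{p,q}(z_1,\dots,z_p,\hat z_1,\dots,\hat z_q)\in\mathbb R^p$ is the vector whose $j$-th entry is $\prod_{l=1}^q|z_j-\hat z_l|$. For an integer $k\ge1$: $\zeta(k)=\big((\tfrac{k-1}{2})!\big)^2$ if $k$ is odd, $\zeta(k)=(\tfrac{k}{2})!(\tfrac{k-2}{2})!$ if $k$ is even. *)

From Stdlib Require Import Reals Lra Lia List Arith.
Import ListNotations.
Open Scope R_scope.

Definition Cplx := (R * R)%type.
Definition C0 : Cplx := (0, 0).
Definition C1 : Cplx := (1, 0).
Definition Cadd (z w : Cplx) : Cplx := (fst z + fst w, snd z + snd w).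
Definition Csub (z w : Cplx) : Cplx := (fst z - fst w, snd z - snd w).
Definition Cmul (z w : Cplx) : Cplx :=
  (fst z * fst w - snd z * snd w, fst z * snd w + snd z * fst w).
Fixpoint Cpow (z : Cplx) (n : nat) : Cplx :=
  match n with O => C1 | S m => Cmul z (Cpow z m) end.
Definition Cmod (z : Cplx) : R := sqrt (fst z ^ 2 + snd z ^ 2).
Definition Cexpi (t : R) : Cplx := (cos t, sin t).

Definition Csum (n : nat) (f : nat -> Cplx) : Cplx := fold_right Cadd C0 (map f (seq 0 n)).
Definition Rsum (n : nat) (f : nat -> R) : R := fold_right Rplus 0 (map f (seq 0 n)).
Definition Rprod (n : nat) (f : nat -> R) : R := fold_right Rmult 1 (map f (seq 0 n)).

(* phi_s(z) = (1, z, ..., z^s)^T : entry r (0 <= r <= s) is z^r. *)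
Definition phi (s : nat) (z : Cplx) (r : nat) : Cplx := Cpow z r.

(* (A a)_r where A = (phi_s(z_1), ..., phi_s(z_k)) (columns), a in Cplx^k. *)
Definition matvec (s k : nat) (z : nat -> Cplx) (a : nat -> Cplx) (r : nat) : Cplx :=
  Csum k (fun j => Cmul (phi s (z j) r) (a j)).

Definition Cnorm2 (n : nat) (v : nat -> Cplx) : R := sqrt (Rsum n (fun r => Cmod (v r) ^ 2)).

Definition Rinf_norm (n : nat) (v : nat -> R) : R :=
  fold_right Rmax 0 (map (fun j => Rabs (v j)) (seq 0 n)).

Definition eta (p q : nat) (z zh : nat -> Cplx) (j : nat) : R :=
  Rprod q (fun l => Cmod (Csub (z j) (zh l))).

Definition zeta (k : nat) : R :=
  if Nat.odd k then (INR (fact ((k - 1) / 2))) ^ 2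
  else INR (fact (k / 2)) * INR (fact ((k - 2) / 2)).

Definition theta_min (th : nat -> R) (k : nat) : R :=
  let l := flat_map (fun p => map (fun j => Rabs (th p - th j))
              (filter (fun j => negb (Nat.eqb p j)) (seq 0 k))) (seq 0 k) in
  match l with nil => 0 | x :: t => fold_right Rmin x t end.

From Pilot Require Import Defs.
From Stdlib Require Import Reals Lra Lia List Arith Permutation FinFun.
From Coquelicot Require Complex.
Import ListNotations.
Open Scope R_scope.

(* Fix j and let P be the monic polynomial of degree 2k-1 whose roots are all the
   e^{i thetah_l} and the e^{i theta_p} with p <> j.  Pairing the coefficient vector of P
   with the residual (Ahat ahat - A a) kills every column except the j-th one of A and
   leaves -a_j P(e^{i theta_j}); since all roots have modulus 1 the coefficients of P have
   l1-norm at most 2^(2k-1), hence |a_j| |P(e^{i theta_j})| < 2^(2k-1) sigma.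
   Now |P(e^{i theta_j})| = eta_j * prod_{p<>j} |e^{i theta_j} - e^{i theta_p}|, every chord is
   at least (2/PI) |theta_j - theta_p| by Jordan's inequality, and k-1 reals that are
   theta_min-separated from each other and from theta_j have distances to theta_j whose
   product is at least floor((k-1)/2)! ceil((k-1)/2)! theta_min^(k-1) = zeta(k) theta_min^(k-1),
   the worst case being half of them on each side. *)

Ltac cplx_ring :=
  unfold Cadd, Csub, Cmul, C0, Defs.C1; apply injective_projections; cbn [fst snd]; ring.

Lemma Cmod_Cadd_le z w : Cmod (Cadd z w) <= Cmod z + Cmod w.
Proof. exact (Complex.Cmod_triangle z w). Qed.

Lemma Cmod_Cmul z w : Cmod (Cmul z w) = Cmod z * Cmod w.
Proof. exact (Complex.Cmod_mult z w). Qed.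

Lemma Cmod_ge0 z : 0 <= Cmod z.
Proof. exact (Complex.Cmod_ge_0 z). Qed.

Lemma Cmod_C0 : Cmod C0 = 0.
Proof. unfold Cmod, C0; cbn [fst snd]. replace (0 ^ 2 + 0 ^ 2) with 0 by ring. apply sqrt_0. Qed.

Lemma Cmod_C1 : Cmod Defs.C1 = 1.
Proof. unfold Cmod, Defs.C1; cbn [fst snd]. replace (1 ^ 2 + 0 ^ 2) with 1 by ring. apply sqrt_1. Qed.

Lemma Cmod_Cexpi t : Cmod (Cexpi t) = 1.
Proof.
  unfold Cmod, Cexpi; cbn [fst snd]. pose proof (sin2_cos2 t) as E. unfold Rsqr in E.
  replace (cos t ^ 2 + sin t ^ 2) with 1 by lra. apply sqrt_1.
Qed.

Lemma Cmod_Csub_le z w : Cmod (Csub z w) <= Cmod z + Cmod w.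
Proof.
  replace (Csub z w) with (Cadd z (Cmul (-1, 0) w)) by cplx_ring.
  eapply Rle_trans; [apply Cmod_Cadd_le|]. rewrite Cmod_Cmul.
  assert (Cmod (-1, 0) = 1) as ->; [|lra].
  unfold Cmod; cbn [fst snd]. replace ((-1) ^ 2 + 0 ^ 2) with 1 by ring. apply sqrt_1.
Qed.

Lemma Cmod_C0_sub z : Cmod (Csub C0 z) = Cmod z.
Proof. unfold Cmod, Csub, C0; cbn [fst snd]. f_equal. ring. Qed.

Lemma Csum_0 f : Csum 0 f = C0.
Proof. reflexivity. Qed.

Lemma Csum_S n f : Csum (S n) f = Cadd (Csum n f) (f n).
Proof.
  unfold Csum. rewrite seq_S, map_app, fold_right_app. cbn [map fold_right Nat.add].
  induction (map f (seq 0 n)) as [|x l IH]; cbn [fold_right]; [|rewrite IH]; cplx_ring.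
Qed.

Lemma Csum_ext n f g : (forall r, (r < n)%nat -> f r = g r) -> Csum n f = Csum n g.
Proof. induction n; intros H; [reflexivity|]. rewrite !Csum_S, IHn, H; auto. Qed.

Lemma Csum_sub n f g : Csum n (fun r => Csub (f r) (g r)) = Csub (Csum n f) (Csum n g).
Proof. induction n; [rewrite !Csum_0; cplx_ring|]. rewrite !Csum_S, IHn. cplx_ring. Qed.

Lemma Csum_add n f g : Csum n (fun r => Cadd (f r) (g r)) = Cadd (Csum n f) (Csum n g).
Proof. induction n; [rewrite !Csum_0; cplx_ring|]. rewrite !Csum_S, IHn. cplx_ring. Qed.

Lemma Csum_mull n c f : Csum n (fun r => Cmul c (f r)) = Cmul c (Csum n f).
Proof. induction n; [rewrite !Csum_0; cplx_ring|]. rewrite !Csum_S, IHn. cplx_ring. Qed.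

Lemma Csum_eq0 n f : (forall r, (r < n)%nat -> f r = C0) -> Csum n f = C0.
Proof. induction n; intros H; [reflexivity|]. rewrite Csum_S, IHn, H; auto. cplx_ring. Qed.

Lemma Csum_single n j f : (j < n)%nat -> (forall r, (r < n)%nat -> r <> j -> f r = C0) ->
  Csum n f = f j.
Proof.
  induction n; intros Hj H; [lia|]. rewrite Csum_S.
  destruct (Nat.eq_dec j n) as [->|Hjn].
  - rewrite Csum_eq0 by (intros; apply H; lia). cplx_ring.
  - rewrite IHn, (H n) by (try lia; intros; apply H; lia). cplx_ring.
Qed.

Lemma Csum_swap n m f :
  Csum n (fun r => Csum m (fun l => f r l)) = Csum m (fun l => Csum n (fun r => f r l)).
Proof.
  induction n.
  - symmetry. apply Csum_eq0. reflexivity.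
  - rewrite Csum_S, IHn, <- Csum_add. apply Csum_ext. intros. now rewrite Csum_S.
Qed.

Lemma Rsum_0 f : Rsum 0 f = 0.
Proof. reflexivity. Qed.

Lemma Rsum_S n f : Rsum (S n) f = Rsum n f + f n.
Proof.
  unfold Rsum. rewrite seq_S, map_app, fold_right_app. cbn [map fold_right Nat.add].
  induction (map f (seq 0 n)) as [|x l IH]; cbn [fold_right]; [|rewrite IH]; ring.
Qed.

Lemma Rsum_le n f g : (forall r, (r < n)%nat -> f r <= g r) -> Rsum n f <= Rsum n g.
Proof.
  induction n; intros H; [rewrite !Rsum_0; lra|]. rewrite !Rsum_S.
  apply Rplus_le_compat; auto.
Qed.

Lemma Rsum_ge0 n f : (forall r, (r < n)%nat -> 0 <= f r) -> 0 <= Rsum n f.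
Proof.
  intros H. replace 0 with (Rsum n (fun _ => 0)).
  - apply Rsum_le. exact H.
  - induction n; [reflexivity|]. rewrite Rsum_S, IHn; [ring|auto].
Qed.

Lemma Rsum_term_le n f r : (r < n)%nat -> (forall i, (i < n)%nat -> 0 <= f i) -> f r <= Rsum n f.
Proof.
  induction n; intros Hr H; [lia|]. rewrite Rsum_S.
  destruct (Nat.eq_dec r n) as [->|Hrn].
  - pose proof (Rsum_ge0 n f (fun i Hi => H i ltac:(lia))). lra.
  - pose proof (IHn ltac:(lia) (fun i Hi => H i ltac:(lia))). pose proof (H n ltac:(lia)). lra.
Qed.

Lemma Rsum_add n f g : Rsum n (fun r => f r + g r) = Rsum n f + Rsum n g.
Proof. induction n; [rewrite !Rsum_0; ring|]. rewrite !Rsum_S, IHn. ring. Qed.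

Lemma Rsum_mulr n f c : Rsum n (fun r => f r * c) = Rsum n f * c.
Proof. induction n; [rewrite !Rsum_0; ring|]. rewrite !Rsum_S, IHn. ring. Qed.

Lemma Cmod_Csum_le n f : Cmod (Csum n f) <= Rsum n (fun r => Cmod (f r)).
Proof.
  induction n; [rewrite Csum_0, Cmod_C0, Rsum_0; lra|].
  rewrite Csum_S, Rsum_S. eapply Rle_trans; [apply Cmod_Cadd_le|]. lra.
Qed.

Lemma Cmod_le_Cnorm2 n v r : (r < n)%nat -> Cmod (v r) <= Cnorm2 n v.
Proof.
  intros Hr. unfold Cnorm2. rewrite <- (sqrt_pow2 (Cmod (v r))) by apply Cmod_ge0.
  apply sqrt_le_1_alt, (Rsum_term_le n (fun r => Cmod (v r) ^ 2)); auto.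
  intros; apply pow2_ge_0.
Qed.

Lemma Cmod_pairing_le n c v :
  Cmod (Csum n (fun r => Cmul (c r) (v r))) <= Rsum n (fun r => Cmod (c r)) * Cnorm2 n v.
Proof.
  eapply Rle_trans; [apply Cmod_Csum_le|]. rewrite <- Rsum_mulr. apply Rsum_le.
  intros r Hr. rewrite Cmod_Cmul.
  apply Rmult_le_compat_l; [apply Cmod_ge0|apply Cmod_le_Cnorm2; exact Hr].
Qed.

Definition prodl {A : Type} (f : A -> R) (l : list A) : R := fold_right Rmult 1 (map f l).

Section Products.
Context {A : Type}.

Lemma prodl_app (f : A -> R) l l' : prodl f (l ++ l') = prodl f l * prodl f l'.
Proof. unfold prodl. rewrite map_app, fold_right_app. induction l; cbn; [ring|]. rewrite IHl. ring. Qed.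

Lemma prodl_map {B : Type} (f : B -> R) (g : A -> B) l : prodl f (map g l) = prodl (fun x => f (g x)) l.
Proof. unfold prodl. now rewrite map_map. Qed.

Lemma prodl_scale (f : A -> R) c l : prodl (fun x => c * f x) l = c ^ length l * prodl f l.
Proof. unfold prodl. induction l; cbn; [ring|]. rewrite IHl. ring. Qed.

Lemma prodl_perm (f : A -> R) l l' : Permutation l l' -> prodl f l = prodl f l'.
Proof. unfold prodl. induction 1; cbn; try lra. rewrite IHPermutation. ring. Qed.

Lemma prodl_filter (f : A -> R) g l :
  prodl f l = prodl f (filter g l) * prodl f (filter (fun x => negb (g x)) l).
Proof. unfold prodl. induction l; cbn; [ring|]. destruct (g a); cbn; rewrite IHl; ring. Qed.

Lemma prodl_ge0 (f : A -> R) l : (forall x, In x l -> 0 <= f x) -> 0 <= prodl f l.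
Proof.
  unfold prodl. induction l; intros H; cbn; [lra|].
  apply Rmult_le_pos; [apply H; now left|apply IHl; intros; apply H; now right].
Qed.

Lemma prodl_le (f g : A -> R) l : (forall x, In x l -> 0 <= f x <= g x) -> prodl f l <= prodl g l.
Proof.
  induction l as [|x l IH]; intros H; unfold prodl; cbn; [lra|]. fold (prodl f l) (prodl g l).
  destruct (H x (or_introl eq_refl)).
  apply Rmult_le_compat; auto.
  - apply prodl_ge0. intros y Hy. apply H. now right.
  - apply IH. intros y Hy. apply H. now right.
Qed.

End Products.

Definition poly_eval (n : nat) (c : nat -> Cplx) (x : Cplx) : Cplx :=
  Csum n (fun r => Cmul (c r) (Cpow x r)).

Definition coef_mulX (c : nat -> Cplx) (r : nat) : Cplx :=
  match r with O => C0 | S r' => c r' end.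

Definition coef_mul_linear (w : Cplx) (c : nat -> Cplx) (r : nat) : Cplx :=
  Csub (coef_mulX c r) (Cmul w (c r)).

Definition coef_one (r : nat) : Cplx := if Nat.eqb r 0 then Defs.C1 else C0.

(* Coefficients of the monic polynomial [prod_(w <- ws) (X - w)], lowest degree first. *)
Definition root_coefs (ws : list Cplx) : nat -> Cplx := fold_right coef_mul_linear coef_one ws.

Definition root_prod (ws : list Cplx) (x : Cplx) : Cplx :=
  fold_right (fun w acc => Cmul (Csub x w) acc) Defs.C1 ws.

Lemma root_coefs_high ws r : (length ws < r)%nat -> root_coefs ws r = C0.
Proof.
  revert r; induction ws as [|w ws IH]; intros [|r] Hr; cbn in *; try lia.
  - reflexivity.
  - unfold coef_mul_linear, coef_mulX. rewrite !IH by lia. cplx_ring.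
Qed.

Lemma poly_eval_mulX n c x : poly_eval (S n) (coef_mulX c) x = Cmul x (poly_eval n c x).
Proof.
  unfold poly_eval. induction n.
  - rewrite Csum_S, !Csum_0. cbn [coef_mulX]. cplx_ring.
  - rewrite Csum_S, IHn, (Csum_S n). cbn [coef_mulX Cpow]. cplx_ring.
Qed.

Lemma poly_eval_mul_linear n w c x : c n = C0 ->
  poly_eval (S n) (coef_mul_linear w c) x = Cmul (Csub x w) (poly_eval n c x).
Proof.
  intros Hcn. unfold poly_eval at 1, coef_mul_linear.
  erewrite Csum_ext by (intros r _; instantiate (1 := fun r =>
    Csub (Cmul (coef_mulX c r) (Cpow x r)) (Cmul w (Cmul (c r) (Cpow x r)))); cbn; cplx_ring).
  rewrite Csum_sub, Csum_mull. fold (poly_eval (S n) (coef_mulX c) x).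
  rewrite poly_eval_mulX, Csum_S, Hcn. fold (poly_eval n c x). cplx_ring.
Qed.

Lemma poly_eval_root_coefs ws n x : (length ws < n)%nat ->
  poly_eval n (root_coefs ws) x = root_prod ws x.
Proof.
  revert n; induction ws as [|w ws IH]; intros n Hn; cbn in Hn.
  - unfold poly_eval. rewrite (Csum_single n 0); [cbn; cplx_ring|lia|].
    intros [|r] _ Hr; [lia|cbn; cplx_ring].
  - destruct n as [|n]; [lia|]. cbn [root_coefs fold_right root_prod].
    rewrite poly_eval_mul_linear, IH by (try apply root_coefs_high; lia). reflexivity.
Qed.

Lemma root_prod_root ws w : In w ws -> root_prod ws w = C0.
Proof.
  unfold root_prod. induction ws as [|v ws IH]; cbn [In fold_right]; [tauto|]. intros [<-|Hw].
  - cplx_ring.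
  - rewrite IH by exact Hw. cplx_ring.
Qed.

Lemma Cmod_root_prod ws x : Cmod (root_prod ws x) = prodl (fun w => Cmod (Csub x w)) ws.
Proof.
  unfold root_prod, prodl. induction ws; cbn [map fold_right]; [apply Cmod_C1|].
  rewrite Cmod_Cmul, IHws. reflexivity.
Qed.

Lemma coef_norm1_mulX n c :
  Rsum (S n) (fun r => Cmod (coef_mulX c r)) = Rsum n (fun r => Cmod (c r)).
Proof.
  induction n.
  - rewrite Rsum_S, !Rsum_0. cbn [coef_mulX]. rewrite Cmod_C0. ring.
  - rewrite Rsum_S, IHn, Rsum_S. reflexivity.
Qed.

Lemma coef_norm1_mul_linear n w c :
  Rsum n (fun r => Cmod (coef_mul_linear w c r)) <= (1 + Cmod w) * Rsum n (fun r => Cmod (c r)).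
Proof.
  assert (Hshift : Rsum n (fun r => Cmod (coef_mulX c r)) <= Rsum n (fun r => Cmod (c r))).
  { rewrite <- (coef_norm1_mulX n c), Rsum_S. pose proof (Cmod_ge0 (coef_mulX c n)). lra. }
  eapply Rle_trans.
  - apply (Rsum_le n _ (fun r => Cmod (coef_mulX c r) + Cmod (c r) * Cmod w)).
    intros r _. rewrite Rmult_comm, <- Cmod_Cmul. apply Cmod_Csub_le.
  - rewrite Rsum_add, Rsum_mulr. lra.
Qed.

Lemma coef_norm1_root_coefs n ws :
  Rsum n (fun r => Cmod (root_coefs ws r)) <= prodl (fun w => 1 + Cmod w) ws.
Proof.
  unfold prodl. induction ws as [|w ws IH]; cbn [root_coefs fold_right map].
  - induction n as [|[|n] IHn]; [rewrite Rsum_0; lra| |].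
    + rewrite Rsum_S, Rsum_0. replace (coef_one 0) with Defs.C1 by reflexivity. rewrite Cmod_C1. lra.
    + rewrite Rsum_S. replace (coef_one (S n)) with C0 by reflexivity. rewrite Cmod_C0. lra.
  - eapply Rle_trans; [apply coef_norm1_mul_linear|].
    apply Rmult_le_compat_l; [pose proof (Cmod_ge0 w); lra|exact IH].
Qed.

Lemma sin_lb_eq x : sin_lb x = x - x ^ 3 / 6 + x ^ 5 / 120 - x ^ 7 / 5040.
Proof.
  unfold sin_lb, sin_approx, sin_term. cbn [sum_f_R0 Nat.mul Nat.add].
  rewrite !INR_IZR_INZ. cbn -[IZR]. field.
Qed.

Lemma cos_lb_eq x : cos_lb x = 1 - x ^ 2 / 2 + x ^ 4 / 24 - x ^ 6 / 720.
Proof.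
  unfold cos_lb, cos_approx, cos_term. cbn [sum_f_R0 Nat.mul Nat.add].
  rewrite !INR_IZR_INZ. cbn -[IZR]. field.
Qed.

(* On [0, 1] use the Taylor lower bound of [sin] at 0,
   on [1, PI/2] the one of [cos] at [PI/2 - x]. *)
Lemma sin_ge_jordan x : 0 <= x <= PI / 2 -> 2 / PI * x <= sin x.
Proof.
  intros [H0 H1]. pose proof PI2_3_2. pose proof PI_4.
  destruct (Rle_lt_dec x 1).
  - destruct (SIN x) as [Hs _]; [lra|lra|]. rewrite sin_lb_eq in Hs.
    assert (2 / PI <= 5 / 6) by (apply Rmult_le_reg_r with PI; [lra|field_simplify; lra]).
    assert (x ^ 3 <= x) by (simpl; nra).
    assert (x ^ 7 <= x ^ 5).
    { replace (x ^ 7) with (x ^ 5 * x ^ 2) by ring. rewrite <- (Rmult_1_r (x ^ 5)) at 2.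
      apply Rmult_le_compat_l; [apply pow_le|simpl]; nra. }
    pose proof (pow_le x 5 H0).
    assert (2 / PI * x <= 5 / 6 * x) by (apply Rmult_le_compat_r; lra). lra.
  - rewrite <- cos_shift. set (y := PI / 2 - x).
    destruct (COS y) as [Hc _]; unfold y; [lra|lra|]. fold y. rewrite cos_lb_eq in Hc.
    assert (0 <= y <= 1) by (unfold y; lra).
    assert (y ^ 6 <= y ^ 4).
    { replace (y ^ 6) with (y ^ 4 * y ^ 2) by ring. rewrite <- (Rmult_1_r (y ^ 4)) at 2.
      apply Rmult_le_compat_l; [apply pow_le|simpl]; nra. }
    assert (y ^ 2 / 2 <= 2 * y / PI)
      by (apply Rmult_le_reg_r with PI; [lra|field_simplify; [simpl; nra|lra]]).
    pose proof (pow_le y 4 ltac:(lra)).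
    replace (2 / PI * x) with (1 - 2 * y / PI) by (unfold y; field; lra). lra.
Qed.

Lemma Rabs_sin_ge_jordan h : Rabs h <= PI / 2 -> 2 / PI * Rabs h <= Rabs (sin h).
Proof.
  intros H. pose proof PI2_3_2.
  destruct (Rle_lt_dec 0 h) as [Hh|Hh].
  - rewrite Rabs_right in H |- * by lra.
    rewrite Rabs_right by (apply Rle_ge, sin_ge_0; lra). apply sin_ge_jordan. lra.
  - rewrite Rabs_left in H |- * by lra. rewrite <- Rabs_Ropp, <- sin_neg.
    rewrite Rabs_right by (apply Rle_ge, sin_ge_0; lra). apply sin_ge_jordan. lra.
Qed.

Lemma Cmod_Cexpi_sub a b : Cmod (Csub (Cexpi a) (Cexpi b)) = Rabs (2 * sin ((a - b) / 2)).
Proof.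
  unfold Cmod, Csub, Cexpi; cbn [fst snd]. rewrite <- sqrt_Rsqr_abs. f_equal. unfold Rsqr.
  replace (2 * sin ((a - b) / 2) * (2 * sin ((a - b) / 2)))
    with (2 * (1 - cos (2 * ((a - b) / 2)))) by (rewrite cos_2a_sin; ring).
  replace (2 * ((a - b) / 2)) with (a - b) by field. rewrite cos_minus.
  pose proof (sin2_cos2 a). pose proof (sin2_cos2 b). unfold Rsqr in *. nra.
Qed.

Lemma Cmod_Cexpi_sub_ge a b : - (PI / 2) <= a <= PI / 2 -> - (PI / 2) <= b <= PI / 2 ->
  2 / PI * Rabs (a - b) <= Cmod (Csub (Cexpi a) (Cexpi b)).
Proof.
  intros Ha Hb. rewrite Cmod_Cexpi_sub, Rabs_mult, (Rabs_right 2) by lra.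
  assert (Habs : Rabs ((a - b) / 2) = Rabs (a - b) / 2).
  { unfold Rdiv. rewrite Rabs_mult, (Rabs_right (/ 2)) by lra. reflexivity. }
  assert (Rabs (a - b) <= PI) by (apply Rabs_le; lra).
  pose proof (Rabs_sin_ge_jordan ((a - b) / 2) ltac:(rewrite Habs; lra)).
  rewrite Habs in *. lra.
Qed.

Definition separated (d : R) (l : list R) : Prop :=
  forall x y, In x l -> In y l -> x <> y -> d <= Rabs (x - y).

Lemma separated_incl d l l' : incl l' l -> separated d l -> separated d l'.
Proof. intros Hincl Hsep x y Hx Hy. apply Hsep; auto. Qed.

Lemma remove_max (l : list R) : l <> [] ->
  exists m l', Permutation l (m :: l') /\ forall y, In y l -> y <= m.
Proof.
  induction l as [|a l IH]; intros Hne; [congruence|].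
  destruct l as [|b l].
  - exists a, []. split; [reflexivity|]. intros y [->|[]]. lra.
  - destruct IH as [m [l' [Hperm Hmax]]]; [discriminate|].
    destruct (Rle_lt_dec a m).
    + exists m, (a :: l'). split.
      * rewrite Hperm. apply perm_swap.
      * intros y [->|Hy]; auto.
    + exists a, (b :: l). split; [reflexivity|].
      intros y [->|Hy]; [lra|]. specialize (Hmax y Hy). lra.
Qed.

Section RightOfPoint.
Variables (t d : R).
Hypothesis Hd : 0 < d.

Lemma separated_right_max n : forall l, length l = S n -> NoDup l ->
  (forall x, In x l -> t + d <= x) -> separated d l ->
  exists x, In x l /\ t + INR (S n) * d <= x.
Proof.
  induction n as [|n IH]; intros l Hlen Hnd Hge Hsep.
  - destruct l as [|x [|]]; try discriminate. exists x. split; [now left|].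
    specialize (Hge x (or_introl eq_refl)). cbn. lra.
  - destruct (remove_max l) as [m [l' [Hperm Hmax]]]; [intros ->; discriminate|].
    assert (Hin : incl l' l) by (intros y Hy; apply (Permutation_in y (Permutation_sym Hperm)); now right).
    pose proof (Permutation_NoDup Hperm Hnd) as Hnd'. apply NoDup_cons_iff in Hnd' as [Hm Hnd'].
    apply Permutation_length in Hperm as Hlen'. cbn in Hlen'.
    destruct (IH l' ltac:(lia) Hnd' (fun x Hx => Hge x (Hin x Hx)) (separated_incl _ _ _ Hin Hsep))
      as [x [Hx Hxge]].
    assert (Hml : In m l) by (apply (Permutation_in m (Permutation_sym Hperm)); now left).
    assert (x <> m) by (intros ->; contradiction).
    pose proof (Hsep m x Hml (Hin x Hx) ltac:(auto)). pose proof (Hmax x (Hin x Hx)).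
    rewrite Rabs_right in * by lra.
    exists m. split; [exact Hml|]. rewrite S_INR. lra.
Qed.

Lemma separated_right_prod n : forall l, length l = n -> NoDup l ->
  (forall x, In x l -> t + d <= x) -> separated d l ->
  INR (fact n) * d ^ n <= prodl (fun x => Rabs (x - t)) l.
Proof.
  induction n as [|n IH]; intros l Hlen Hnd Hge Hsep.
  - destruct l; [|discriminate]. unfold prodl. cbn. lra.
  - destruct (remove_max l) as [m [l' [Hperm Hmax]]]; [intros ->; discriminate|].
    assert (Hin : incl l' l) by (intros y Hy; apply (Permutation_in y (Permutation_sym Hperm)); now right).
    pose proof (Permutation_NoDup Hperm Hnd) as Hnd'. apply NoDup_cons_iff in Hnd' as [_ Hnd'].
    apply Permutation_length in Hperm as Hlen'. cbn in Hlen'.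
    pose proof (IH l' ltac:(lia) Hnd' (fun x Hx => Hge x (Hin x Hx)) (separated_incl _ _ _ Hin Hsep)).
    destruct (separated_right_max n l Hlen Hnd Hge Hsep) as [x [Hx Hxge]].
    pose proof (Hmax x Hx).
    assert (0 <= INR (S n) * d) by (apply Rmult_le_pos; [apply pos_INR|lra]).
    rewrite (prodl_perm _ _ _ Hperm). unfold prodl in *. cbn [map fold_right].
    rewrite Rabs_right by lra. rewrite fact_simpl, mult_INR.
    replace (INR (S n) * INR (fact n) * d ^ S n) with ((INR (S n) * d) * (INR (fact n) * d ^ n))
      by (cbn; ring).
    apply Rmult_le_compat; try lra.
    apply Rmult_le_pos; [apply pos_INR|apply pow_le; lra].
Qed.

End RightOfPoint.

Lemma separated_left_prod t d n l : 0 < d -> length l = n -> NoDup l ->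
  (forall x, In x l -> x + d <= t) -> separated d l ->
  INR (fact n) * d ^ n <= prodl (fun x => Rabs (x - t)) l.
Proof.
  intros Hd Hlen Hnd Hle Hsep.
  replace (prodl (fun x => Rabs (x - t)) l) with (prodl (fun y => Rabs (y - - t)) (map Ropp l)).
  - apply separated_right_prod; [exact Hd|now rewrite length_map| | |].
    + apply Injective_map_NoDup; [intros x y; lra|exact Hnd].
    + intros y Hy. apply in_map_iff in Hy as [x [<- Hx]]. specialize (Hle x Hx). lra.
    + intros y z Hy Hz Hyz. apply in_map_iff in Hy as [x [<- Hx]]. apply in_map_iff in Hz as [w [<- Hw]].
      replace (- x - - w) with (- (x - w)) by ring. rewrite Rabs_Ropp.
      apply Hsep; auto. intros ->. auto.
  - unfold prodl. rewrite map_map. f_equal. apply map_ext. intros x.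
    rewrite <- Rabs_Ropp. f_equal. ring.
Qed.

Lemma div2_double a : ((2 * a) / 2 = a)%nat.
Proof. rewrite Nat.mul_comm. apply Nat.div_mul. lia. Qed.

Lemma div2_double_S a : ((2 * a + 1) / 2 = a)%nat.
Proof. symmetry. apply (Nat.div_unique _ 2 a 1); lia. Qed.

(* Moving two factorial arguments towards each other decreases the product. *)
Lemma fact_half_le_gap d : forall a,
  (fact ((a + (a + d)) / 2) * fact ((a + (a + d) + 1) / 2) <= fact a * fact (a + d))%nat.
Proof.
  induction d as [d IH] using lt_wf_ind. intros a.
  destruct d as [|[|d]].
  - replace (a + (a + 0))%nat with (2 * a)%nat by lia.
    rewrite div2_double, div2_double_S, Nat.add_0_r. lia.
  - replace (a + (a + 1))%nat with (2 * a + 1)%nat by lia.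
    replace (2 * a + 1 + 1)%nat with (2 * (a + 1))%nat by lia.
    rewrite div2_double, div2_double_S, Nat.add_1_r. lia.
  - specialize (IH d ltac:(lia) (S a)).
    replace (S a + (S a + d))%nat with (a + (a + S (S d)))%nat in IH by lia.
    eapply Nat.le_trans; [exact IH|].
    replace (a + S (S d))%nat with (S (S a + d)) by lia.
    rewrite (fact_simpl a), (fact_simpl (S a + d)). nia.
Qed.

Lemma fact_half_le a b : (fact ((a + b) / 2) * fact ((a + b + 1) / 2) <= fact a * fact b)%nat.
Proof.
  destruct (Nat.le_ge_cases a b).
  - replace b with (a + (b - a))%nat by lia. apply fact_half_le_gap.
  - rewrite (Nat.mul_comm (fact a)), (Nat.add_comm a b).
    replace a with (b + (a - b))%nat by lia. apply fact_half_le_gap.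
Qed.

Lemma separated_prod t d l : 0 < d -> NoDup l ->
  (forall x, In x l -> d <= Rabs (x - t)) -> separated d l ->
  INR (fact (length l / 2) * fact ((length l + 1) / 2)) * d ^ length l
  <= prodl (fun x => Rabs (x - t)) l.
Proof.
  intros Hd Hnd Hfar Hsep.
  set (left_of := fun x => if Rlt_dec x t then true else false).
  set (L := filter left_of l). set (Rt := filter (fun x => negb (left_of x)) l).
  assert (HL : INR (fact (length L)) * d ^ length L <= prodl (fun x => Rabs (x - t)) L).
  { apply separated_left_prod; [exact Hd|reflexivity|apply NoDup_filter, Hnd| |].
    - intros x Hx. apply filter_In in Hx as [Hx Hlt]. unfold left_of in Hlt.
      destruct (Rlt_dec x t); [|discriminate]. specialize (Hfar x Hx).
      rewrite Rabs_left in Hfar by lra. lra.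
    - apply (separated_incl _ l); [intros x Hx; now apply filter_In in Hx|exact Hsep]. }
  assert (HR : INR (fact (length Rt)) * d ^ length Rt <= prodl (fun x => Rabs (x - t)) Rt).
  { apply separated_right_prod; [exact Hd|reflexivity|apply NoDup_filter, Hnd| |].
    - intros x Hx. apply filter_In in Hx as [Hx Hge]. unfold left_of in Hge.
      destruct (Rlt_dec x t); [discriminate|]. specialize (Hfar x Hx).
      rewrite Rabs_right in Hfar by lra. lra.
    - apply (separated_incl _ l); [intros x Hx; now apply filter_In in Hx|exact Hsep]. }
  rewrite (prodl_filter _ left_of l), <- (filter_length left_of l). fold L Rt.
  pose proof (le_INR _ _ (fact_half_le (length L) (length Rt))) as Hfact.
  rewrite !mult_INR in Hfact. rewrite mult_INR, pow_add.
  pose proof (pos_INR (fact ((length L + length Rt) / 2))).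
  pose proof (pos_INR (fact ((length L + length Rt + 1) / 2))).
  pose proof (pow_le d (length L) ltac:(lra)). pose proof (pow_le d (length Rt) ltac:(lra)).
  apply Rle_trans with ((INR (fact (length L)) * d ^ length L) * (INR (fact (length Rt)) * d ^ length Rt)).
  - replace ((INR (fact (length L)) * d ^ length L) * (INR (fact (length Rt)) * d ^ length Rt))
      with ((INR (fact (length L)) * INR (fact (length Rt))) * (d ^ length L * d ^ length Rt)) by ring.
    apply Rmult_le_compat_r; [nra|exact Hfact].
  - apply Rmult_le_compat; auto; apply Rmult_le_pos; auto using pos_INR.
Qed.

Lemma zeta_eq k : (1 <= k)%nat -> zeta k = INR (fact ((k - 1) / 2) * fact (k / 2)).
Proof.
  intros Hk. unfold zeta. rewrite mult_INR.
  destruct (Nat.Even_or_Odd k) as [[m ->]|[m ->]].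
  - rewrite Nat.odd_even. destruct m as [|m]; [lia|].
    replace (2 * S m - 1)%nat with (2 * m + 1)%nat by lia.
    replace (2 * S m - 2)%nat with (2 * m)%nat by lia.
    rewrite div2_double_S, !div2_double. ring.
  - rewrite Nat.odd_odd. replace (2 * m + 1 - 1)%nat with (2 * m)%nat by lia.
    rewrite div2_double, div2_double_S. ring.
Qed.

Lemma coef_norm1_unit_roots n ws : (forall w, In w ws -> Cmod w = 1) ->
  Rsum n (fun r => Cmod (root_coefs ws r)) <= 2 ^ length ws.
Proof.
  intros H. eapply Rle_trans; [apply coef_norm1_root_coefs|].
  replace (2 ^ length ws) with (prodl (fun _ => 1 + 1) ws).
  - apply prodl_le. intros w Hw. rewrite H by exact Hw. lra.
  - unfold prodl. clear H. induction ws; cbn; [reflexivity|]. rewrite IHws. ring.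
Qed.

Lemma pairing_matvec n s k c z a :
  Csum n (fun r => Cmul (c r) (matvec s k z a r)) = Csum k (fun l => Cmul (a l) (poly_eval n c (z l))).
Proof.
  unfold matvec, phi.
  rewrite (Csum_ext n _ (fun r => Csum k (fun l => Cmul (a l) (Cmul (c r) (Cpow (z l) r))))).
  - rewrite Csum_swap. apply Csum_ext. intros l _. unfold poly_eval. now rewrite Csum_mull.
  - intros r _. rewrite <- Csum_mull. apply Csum_ext. intros. cplx_ring.
Qed.

Lemma pairing_root_coefs_residual n s k zh ah z a ws j : (length ws < n)%nat -> (j < k)%nat ->
  (forall l, (l < k)%nat -> In (zh l) ws) -> (forall p, (p < k)%nat -> p <> j -> In (z p) ws) ->
  Csum n (fun r => Cmul (root_coefs ws r) (Csub (matvec s k zh ah r) (matvec s k z a r)))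
  = Csub C0 (Cmul (a j) (root_prod ws (z j))).
Proof.
  intros Hlen Hj Hzh Hz.
  erewrite Csum_ext by (intros r _; instantiate (1 := fun r =>
    Csub (Cmul (root_coefs ws r) (matvec s k zh ah r)) (Cmul (root_coefs ws r) (matvec s k z a r)));
    cbn; cplx_ring).
  rewrite Csum_sub, !pairing_matvec.
  rewrite Csum_eq0 by (intros l Hl; rewrite poly_eval_root_coefs, root_prod_root by auto; cplx_ring).
  rewrite (Csum_single k j), poly_eval_root_coefs by (try lia; intros p Hp Hpj;
    rewrite poly_eval_root_coefs, root_prod_root by auto; cplx_ring).
  reflexivity.
Qed.

Lemma fold_Rmin_In x l : In (fold_right Rmin x l) (x :: l).
Proof.
  induction l as [|y l IH]; cbn; [now left|].
  apply (Rmin_case y (fold_right Rmin x l) (fun m => x = m \/ y = m \/ In m l)); [tauto|].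
  destruct IH; tauto.
Qed.

Lemma fold_Rmin_le x l y : In y (x :: l) -> fold_right Rmin x l <= y.
Proof.
  induction l as [|z l IH]; cbn; intros Hy.
  - destruct Hy as [->|[]]. lra.
  - pose proof (Rmin_l z (fold_right Rmin x l)). pose proof (Rmin_r z (fold_right Rmin x l)).
    destruct Hy as [->|[->|Hy]]; [pose proof (IH (or_introl eq_refl))|
      |pose proof (IH (or_intror Hy))]; lra.
Qed.

Lemma In_theta_gaps theta k y :
  In y (flat_map (fun p => map (fun j => Rabs (theta p - theta j))
          (filter (fun j => negb (Nat.eqb p j)) (seq 0 k))) (seq 0 k)) <->
  exists p j, (p < k)%nat /\ (j < k)%nat /\ p <> j /\ y = Rabs (theta p - theta j).
Proof.
  rewrite in_flat_map. split.
  - intros [p [Hp Hy]]. apply in_map_iff in Hy as [j [<- Hj]].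
    apply filter_In in Hj as [Hj Hpj]. apply in_seq in Hp, Hj.
    exists p, j. repeat split; try lia. intros ->. now rewrite Nat.eqb_refl in Hpj.
  - intros [p [j [Hp [Hj [Hpj ->]]]]]. exists p. split; [apply in_seq; lia|].
    apply in_map_iff. exists j. split; [reflexivity|]. apply filter_In.
    split; [apply in_seq; lia|]. now apply Nat.eqb_neq in Hpj as ->.
Qed.

Lemma theta_min_spec theta k : (2 <= k)%nat ->
  (forall p j, (p < k)%nat -> (j < k)%nat -> p <> j -> theta p <> theta j) ->
  0 < theta_min theta k /\
  forall p j, (p < k)%nat -> (j < k)%nat -> p <> j -> theta_min theta k <= Rabs (theta p - theta j).
Proof.
  intros Hk Hd. unfold theta_min.
  pose proof (In_theta_gaps theta k) as Hin.
  destruct flat_map as [|x l].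
  - exfalso. apply (Hin (Rabs (theta 0%nat - theta 1%nat))). exists 0%nat, 1%nat. repeat split; lia.
  - split.
    + destruct (proj1 (Hin _) (fold_Rmin_In x l)) as [p [j [Hp [Hj [Hpj ->]]]]].
      apply Rabs_pos_lt. intros H. apply (Hd p j); auto. lra.
    + intros p j Hp Hj Hpj. apply fold_Rmin_le, Hin. exists p, j. auto.
Qed.

Lemma Rinf_norm_lt n v B : 0 < B -> (forall j, (j < n)%nat -> Rabs (v j) < B) -> Rinf_norm n v < B.
Proof.
  intros HB H. unfold Rinf_norm.
  assert (Hl : forall x, In x (map (fun j => Rabs (v j)) (seq 0 n)) -> x < B).
  { intros x Hx. apply in_map_iff in Hx as [j [<- Hj]]. apply in_seq in Hj. apply H. lia. }
  induction (map (fun j => Rabs (v j)) (seq 0 n)); cbn; [exact HB|].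
  apply Rmax_lub_lt; [apply Hl; now left|]. apply IHl. intros. apply Hl. now right.
Qed.

Definition others (k j : nat) : list nat := seq 0 j ++ seq (S j) (k - S j).

Lemma In_others k j p : (j < k)%nat -> In p (others k j) <-> (p < k)%nat /\ p <> j.
Proof. intros Hj. unfold others. rewrite in_app_iff, !in_seq. lia. Qed.

Lemma length_others k j : (j < k)%nat -> length (others k j) = (k - 1)%nat.
Proof. intros Hj. unfold others. rewrite length_app, !length_seq. lia. Qed.

Lemma NoDup_others k j : NoDup (others k j).
Proof.
  apply NoDup_app; try apply seq_NoDup.
  intros p Hp1 Hp2. apply in_seq in Hp1, Hp2. lia.
Qed.

Lemma eta_prodl p q z zh j : eta p q z zh j = prodl (fun l => Cmod (Csub (z j) (zh l))) (seq 0 q).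
Proof. reflexivity. Qed.

Lemma prod_chords_ge k theta d j : (j < k)%nat -> 0 < d ->
  (forall p, (p < k)%nat -> - (PI / 2) <= theta p <= PI / 2) ->
  (forall p q, (p < k)%nat -> (q < k)%nat -> p <> q -> d <= Rabs (theta p - theta q)) ->
  (2 / PI) ^ (k - 1) * (zeta k * d ^ (k - 1))
  <= prodl (fun p => Cmod (Csub (Cexpi (theta j)) (Cexpi (theta p)))) (others k j).
Proof.
  intros Hj Hd Hrange Hgap. pose proof PI_RGT_0.
  set (T := map theta (others k j)).
  assert (HT : forall x, In x T -> exists p, x = theta p /\ (p < k)%nat /\ p <> j).
  { intros x Hx. apply in_map_iff in Hx as [p [<- Hp]]. apply In_others in Hp; eauto. }
  assert (Hlen : length T = (k - 1)%nat) by (unfold T; rewrite length_map; now apply length_others).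
  assert (HnT : NoDup T).
  { apply NoDup_map_NoDup_ForallPairs; [|apply NoDup_others].
    intros p q Hp Hq Heq. apply In_others in Hp as [Hp _], Hq as [Hq _]; [|lia..].
    destruct (Nat.eq_dec p q) as [|Hpq]; [assumption|].
    specialize (Hgap p q Hp Hq Hpq). rewrite Heq, Rminus_diag, Rabs_R0 in Hgap. lra. }
  assert (Hsep : separated d T).
  { intros x y Hx Hy Hxy. apply HT in Hx as [p [-> [Hp _]]], Hy as [q [-> [Hq _]]].
    apply Hgap; [exact Hp|exact Hq|intros ->; auto]. }
  assert (Hfar : forall x, In x T -> d <= Rabs (x - theta j)).
  { intros x Hx. apply HT in Hx as [p [-> [Hp Hpj]]]. auto. }
  pose proof (separated_prod (theta j) d T Hd HnT Hfar Hsep) as Hprod.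
  rewrite Hlen, Nat.sub_add, <- zeta_eq in Hprod by lia.
  apply Rle_trans with ((2 / PI) ^ (k - 1) * prodl (fun x => Rabs (x - theta j)) T).
  { apply Rmult_le_compat_l; [|exact Hprod]. apply pow_le. apply Rlt_le, Rdiv_lt_0_compat; lra. }
  replace (prodl _ (others k j)) with (prodl (fun x => Cmod (Csub (Cexpi (theta j)) (Cexpi x))) T)
    by (unfold T; rewrite prodl_map; reflexivity).
  rewrite <- Hlen, <- prodl_scale. apply prodl_le.
  intros x Hx. apply HT in Hx as [p [-> [Hp _]]]. split.
  - apply Rmult_le_pos; [apply Rlt_le, Rdiv_lt_0_compat; lra|apply Rabs_pos].
  - rewrite Rabs_minus_sym. apply Cmod_Cexpi_sub_ge; auto.
Qed.

Lemma eta_entry_lt k theta thetah a ah d mmin sigma j : (j < k)%nat -> 0 < d ->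
  (forall p, (p < k)%nat -> - (PI / 2) <= theta p <= PI / 2) ->
  (forall p q, (p < k)%nat -> (q < k)%nat -> p <> q -> d <= Rabs (theta p - theta q)) ->
  mmin <= Cmod (a j) ->
  Cnorm2 (2 * k)
    (fun r => Csub (matvec (2 * k - 1) k (fun l => Cexpi (thetah l)) ah r)
                   (matvec (2 * k - 1) k (fun p => Cexpi (theta p)) a r)) < sigma ->
  mmin * ((2 / PI) ^ (k - 1) * (zeta k * d ^ (k - 1)))
    * eta k k (fun p => Cexpi (theta p)) (fun l => Cexpi (thetah l)) j
  < 2 ^ (2 * k - 1) * sigma.
Proof.
  intros Hj Hd Hrange Hgap Ha Hres.
  set (z := fun p => Cexpi (theta p)). set (zh := fun l => Cexpi (thetah l)).
  fold z zh in Hres |- *.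
  set (ws := map zh (seq 0 k) ++ map z (others k j)).
  assert (Hws : length ws = (2 * k - 1)%nat).
  { unfold ws. rewrite length_app, !length_map, length_seq, length_others; lia. }
  assert (Hpair := pairing_root_coefs_residual (2 * k) (2 * k - 1) k zh ah z a ws j
    ltac:(lia) Hj
    ltac:(intros l Hl; apply in_or_app; left; apply in_map, in_seq; lia)
    ltac:(intros p Hp Hpj; apply in_or_app; right; apply in_map, In_others; auto)).
  assert (Hup : Cmod (Csub C0 (Cmul (a j) (root_prod ws (z j))))
                <= 2 ^ (2 * k - 1) * Cnorm2 (2 * k) (fun r => Csub (matvec (2 * k - 1) k zh ah r)
                                                            (matvec (2 * k - 1) k z a r))).
  { rewrite <- Hpair. eapply Rle_trans; [apply Cmod_pairing_le|].
    apply Rmult_le_compat_r; [apply sqrt_pos|]. rewrite <- Hws. apply coef_norm1_unit_roots.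
    intros w Hw. apply in_app_iff in Hw as [Hw|Hw]; apply in_map_iff in Hw as [p [<- _]]; apply Cmod_Cexpi. }
  rewrite Cmod_C0_sub, Cmod_Cmul, Cmod_root_prod in Hup. unfold ws in Hup.
  rewrite prodl_app, !prodl_map, <- (eta_prodl k) in Hup.
  pose proof (prod_chords_ge k theta d j Hj Hd Hrange Hgap) as HQ. fold z in HQ.
  set (E := eta k k z zh j) in *. set (Q := prodl _ (others k j)) in *.
  set (L := (2 / PI) ^ (k - 1) * (zeta k * d ^ (k - 1))) in *.
  assert (HE : 0 <= E) by (unfold E; rewrite eta_prodl; apply prodl_ge0; intros; apply Cmod_ge0).
  assert (HL : 0 <= L).
  { pose proof PI_RGT_0. unfold L. rewrite zeta_eq by lia.
    repeat apply Rmult_le_pos; try apply pow_le; try apply pos_INR; try lra.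
    apply Rlt_le, Rdiv_lt_0_compat; lra. }
  pose proof (Cmod_ge0 (a j)). pose proof (pow_lt 2 (2 * k - 1) ltac:(lra)).
  apply Rle_lt_trans with (Cmod (a j) * (E * Q)).
  2:{ eapply Rle_lt_trans; [exact Hup|]. apply Rmult_lt_compat_l; assumption. }
  apply Rle_trans with (Cmod (a j) * L * E); [apply Rmult_le_compat_r; [lra|nra]|].
  rewrite Rmult_assoc, (Rmult_comm L). apply Rmult_le_compat_l, Rmult_le_compat_l; lra.
Qed.

Theorem theorem3p3 (k : nat) (hk : (2 <= k)%nat)
  (theta thetah : nat -> R) (a ah : nat -> Cplx) (mmin sigma : R)
  (Hth : forall j, (j < k)%nat -> - (PI / 2) <= theta j <= PI / 2)
  (Hthd : forall p j, (p < k)%nat -> (j < k)%nat -> p <> j -> theta p <> theta j)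
  (Hmmin : 0 < mmin)
  (Ha : forall j, (j < k)%nat -> mmin <= Cmod (a j))
  (Hthh : forall j, (j < k)%nat -> - (PI / 2) <= thetah j <= PI / 2)
  (Hthhd : forall p j, (p < k)%nat -> (j < k)%nat -> p <> j -> thetah p <> thetah j)
  (Hres : Cnorm2 (2 * k)
            (fun r => Csub (matvec (2 * k - 1) k (fun j => Cexpi (thetah j)) ah r)
                           (matvec (2 * k - 1) k (fun j => Cexpi (theta j)) a r))
          < sigma) :
  Rinf_norm k (eta k k (fun j => Cexpi (theta j)) (fun l => Cexpi (thetah l)))
  < 2 ^ k * PI ^ (k - 1) / (zeta k * theta_min theta k ^ (k - 1)) * (sigma / mmin).
Proof.
  destruct (theta_min_spec theta k hk Hthd) as [Htm_pos Htm_gap].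
  set (tm := theta_min theta k) in *.
  set (L := (2 / PI) ^ (k - 1) * (zeta k * tm ^ (k - 1))).
  pose proof PI_RGT_0.
  assert (Hsigma : 0 < sigma) by (eapply Rle_lt_trans; [|exact Hres]; apply sqrt_pos).
  assert (Hzeta : 0 < zeta k) by (rewrite zeta_eq by lia; apply lt_0_INR, Nat.mul_pos_pos; apply lt_O_fact).
  assert (HL : 0 < L).
  { unfold L. repeat apply Rmult_lt_0_compat; try apply pow_lt; try lra. apply Rdiv_lt_0_compat; lra. }
  replace (2 ^ k * PI ^ (k - 1) / (zeta k * tm ^ (k - 1)) * (sigma / mmin))
    with (2 ^ (2 * k - 1) * sigma / (mmin * L)).
  2:{ unfold L. replace (2 * k - 1)%nat with (k + (k - 1))%nat by lia.
      rewrite pow_add. unfold Rdiv. rewrite Rpow_mult_distr, pow_inv. field. repeat split; try apply pow_nonzero; lra. }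
  apply Rinf_norm_lt.
  { apply Rdiv_lt_0_compat; apply Rmult_lt_0_compat; try apply pow_lt; lra. }
  intros j Hj. rewrite Rabs_right by (rewrite eta_prodl; apply Rle_ge, prodl_ge0; intros; apply Cmod_ge0).
  apply (Rmult_lt_reg_l (mmin * L)); [nra|].
  replace (mmin * L * (2 ^ (2 * k - 1) * sigma / (mmin * L))) with (2 ^ (2 * k - 1) * sigma)
    by (field; split; lra).
  apply (eta_entry_lt k theta thetah a ah tm mmin sigma j); auto.
Qed.
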